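(* Let $G$ be a $2$-free digraph on $n$ vertices. Then $\tilde{P}_3(G) \leq \frac{2}{25}n^3$.
   Context: All digraphs are finite, have no loops, and have at most one edge $uv$ (the ordered pair $(u,v)$) for each ordered pair of distinct vertices. A digraph is $2$-free if it has no directed cycle of length at most $2$, i.e. there are no distinct vertices $u,v$ with both $uv$ and $vu$ edges. An induced $3$-vertex directed path is a triple $(a,b,c)$ of distinct vertices such that $ab$ and $bc$ are edges and neither $ac$ nor $ca$ is an edge. $\tilde{P}_3(G)$ denotes the number of induced $3$-vertex directed paths in $G$. *)

From mathcomp Require Import all_boot.
Set Implicit Arguments. Unset Strict Implicit. Unset Printing Implicit Defensive.

(* A digraph on the finite vertex type T is an edge relation e : rel T,
   where e u v means the edge uv (ordered pair (u,v)) is present. *)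
Definition loopless (T : finType) (e : rel T) : Prop := forall v : T, ~~ e v v.

Definition two_free (T : finType) (e : rel T) : Prop :=
  loopless e /\ forall u v : T, u != v -> ~~ (e u v && e v u).

Definition induced_P3 (T : finType) (e : rel T) (a b c : T) : bool :=
  [&& a != b, b != c, a != c, e a b, e b c, ~~ e a c & ~~ e c a].

Definition P3tilde (T : finType) (e : rel T) : nat :=
  #|[set t : T * T * T | induced_P3 e t.1.1 t.1.2 t.2]|.

From mathcomp Require Import all_boot all_order all_algebra.
From mathcomp Require Import zify ring.
Import Order.TTheory GRing.Theory Num.Theory.
Set Implicit Arguments. Unset Strict Implicit. Unset Printing Implicit Defensive.

(* Seen from a vertex v, every
   other vertex x has an adjacency indicator s(x) and a signed indicator
   d(x) = [x -> v] - [v -> x]; to pairs x <> y of vertices other than v we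
   give the weight
        W_v(x,y) = -5 s(x)s(y) - 9 d(x)d(y) + 4 s(x) + 4 s(y).
   1. Local inequality: for any three vertices, the sum of W over the six
      orderings of the triple is at least 40 times the number of orderings
      that are induced directed paths; this is a finite check over the
      2-free digraphs on three vertices.
   2. Vertex bound: for fixed v, the total of W_v is a quadratic form in the
      degree S and the imbalance D of v, namely -5S^2 - 9D^2 + (8n-2)S, and
      16n^2 - 5(-5S^2 - 9D^2 + (8n-2)S) = (5S-4n)^2 + 45D^2 + 10S >= 0.
   Summing 1 over all ordered triples (each triple is counted six times)
   gives 40 P3tilde(G) <= sum_v sum_(x,y) W_v(x,y) <= 16n^3/5. *)

Local Open Scope ring_scope.

Section SymmetricTripleSums.
Variables (T : finType) (V : nmodType).

Definition sym3 (g : T * T * T -> V) (t : T * T * T) : V :=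
  g t + g (t.1.1, t.2, t.1.2) + g (t.1.2, t.1.1, t.2) + g (t.1.2, t.2, t.1.1)
      + g (t.2, t.1.1, t.1.2) + g (t.2, t.1.2, t.1.1).

Lemma sum_reindex_inj (g : T * T * T -> V) (h : T * T * T -> T * T * T) :
  injective h -> \sum_t g (h t) = \sum_t g t.
Proof. by move=> h_inj; rewrite [RHS](reindex_inj h_inj). Qed.

Lemma sum_sym3 (g : T * T * T -> V) : \sum_t sym3 g t = (\sum_t g t) *+ 6.
Proof.
rewrite /sym3 !big_split /= !sum_reindex_inj.
  by rewrite !mulrS mulr0n addr0 !addrA.
all: by move=> [[a b] c] [[a' b'] c'] /= [-> -> ->].
Qed.

End SymmetricTripleSums.

Lemma sum_indicator (T : finType) (P : pred T) :
  \sum_t (P t : nat)%:Z = #|[set t | P t]|%:Z.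
Proof.
rewrite -sum1dep_card (big_morph Posz PoszD (erefl _)) [RHS]big_mkcond /=.
by apply: eq_bigr => t _; case: (P t).
Qed.

Section WeightedCounting.
Variables (T : finType) (e : rel T).
Hypothesis two_free_e : two_free e.

Definition adj (v x : T) : int := (e v x || e x v : nat)%:Z.
Definition imb (v x : T) : int := (e x v : nat)%:Z - (e v x : nat)%:Z.
Definition off (v x : T) : int := (x != v : nat)%:Z.

(* The quadratic form W_v(x,y); it vanishes automatically when x = v or y = v,
   and the weight additionally excludes the diagonal x = y. *)
Definition form (v x y : T) : int :=
  - 5 * adj v x * adj v y - 9 * imb v x * imb v y
  + 4 * adj v x * off v y + 4 * off v x * adj v y.
Definition weight (v x y : T) : int := (x != y : nat)%:Z * form v x y.
Definition ind (a b c : T) : int := (induced_P3 e a b c : nat)%:Z.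

Lemma no_loop v : e v v = false.
Proof. by case: two_free_e => /(_ v) /negbTE. Qed.

Lemma no_2cycle u v : u != v -> ~~ (e u v && e v u).
Proof. by case: two_free_e => _; apply. Qed.

Lemma weight_repeat v x :
  [/\ weight v v x = 0, weight v x v = 0 & weight x v v = 0].
Proof. by rewrite /weight /form /adj /imb /off no_loop !eqxx /=; split; lia. Qed.

Lemma ind_repeat v x : [/\ ind v v x = 0, ind v x v = 0 & ind x v v = 0].
Proof. by rewrite /ind /induced_P3 !eqxx /= !andbF. Qed.

Lemma local_inequality t : 40 * sym3 (fun t => ind t.1.1 t.1.2 t.2) t
                              <= sym3 (fun t => weight t.1.1 t.1.2 t.2) t.
Proof.
case: t => [[a b] c]; rewrite /sym3 /=.
case: (eqVneq a b) => [<-|ab].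
  have [-> -> ->] := weight_repeat a c; have [-> -> ->] := ind_repeat a c.
  by rewrite !addr0 mulr0.
case: (eqVneq a c) => [<-|ac].
  have [-> -> ->] := weight_repeat a b; have [-> -> ->] := ind_repeat a b.
  by rewrite !addr0 mulr0.
case: (eqVneq b c) => [<-|bc].
  have [-> -> ->] := weight_repeat b a; have [-> -> ->] := ind_repeat b a.
  by rewrite !addr0 mulr0.
move: (no_2cycle ab) (no_2cycle ac) (no_2cycle bc).
rewrite /ind /induced_P3 /weight /form /adj /imb /off.
rewrite ![b == a]eq_sym ![c == a]eq_sym ![c == b]eq_sym ab ac bc /=.
by case: (e a b); case: (e b a); case: (e a c); case: (e c a);
   case: (e b c); case: (e c b) => //= _ _ _; lia.
Qed.

Definition degree (v : T) : int := \sum_x adj v x.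
Definition imbalance (v : T) : int := \sum_x imb v x.

Lemma sum_off v : \sum_x off v x = #|T|%:Z - 1.
Proof.
rewrite sum_indicator.
have -> : [set x | x != v] = [set~ v] by apply/setP => x; rewrite !inE.
have n_gt0 : (0 < #|T|)%N by apply/card_gt0P; exists v.
by rewrite cardsC1; lia.
Qed.

(* Step 2: the total of the form W_v is a quadratic in degree and imbalance,
   because the form is a sum of products of a function of x and of y. *)
Lemma form_total v :
  \sum_x \sum_y form v x y = - 5 * degree v ^+ 2 - 9 * imbalance v ^+ 2
                             + 8 * (#|T|%:Z - 1) * degree v.
Proof.
have separate x y : form v x y = (- 5 * adj v x) * adj v y
    + (- 9 * imb v x) * imb v y + (4 * adj v x) * off v y
    + (4 * off v x) * adj v y by rewrite /form; ring.
rewrite (eq_bigr _ (fun x _ => eq_bigr _ (fun y _ => separate x y))).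
under eq_bigr do rewrite !big_split.
rewrite !big_split /= -!big_distrlr /= -!mulr_sumr sum_off /degree /imbalance.
ring.
Qed.

(* On the diagonal, s(x)^2 = d(x)^2 = s(x) by 2-freeness. *)
Lemma form_diag v x : form v x x = - 6 * adj v x.
Proof.
rewrite /form /adj /imb /off.
case: (eqVneq x v) => [->|xv]; first by rewrite no_loop.
by move: (no_2cycle xv); case: (e v x); case: (e x v) => //= _; lia.
Qed.

(* Removing the diagonal x = y adds 6 * degree. *)
Lemma weight_total v :
  \sum_x \sum_y weight v x y = - 5 * degree v ^+ 2 - 9 * imbalance v ^+ 2
                               + (8 * #|T|%:Z - 2) * degree v.
Proof.
have row x : \sum_y weight v x y = \sum_y form v x y - form v x x.
  rewrite [LHS](bigD1 x) // [in RHS](bigD1 x) //= /weight eqxx mul0r add0r.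
  by rewrite addrC addrK; apply: eq_bigr => y yx; rewrite eq_sym yx mul1r.
under eq_bigr do rewrite row form_diag.
by rewrite sumrB form_total -mulr_sumr; ring.
Qed.

Lemma weight_total_bound v :
  5 * \sum_x \sum_y weight v x y <= 16 * #|T|%:Z ^+ 2.
Proof.
rewrite weight_total -subr_ge0.
have degree_ge0 : 0 <= degree v by apply: sumr_ge0 => x _; rewrite /adj.
set S := degree v; set D := imbalance v; set n := #|T|%:Z.
have -> : 16 * n ^+ 2 - 5 * (- 5 * S ^+ 2 - 9 * D ^+ 2 + (8 * n - 2) * S)
          = (5 * S - 4 * n) ^+ 2 + 45 * D ^+ 2 + 10 * S by ring.
by rewrite !addr_ge0 ?sqr_ge0 // mulr_ge0 // sqr_ge0.
Qed.

Lemma weighted_count :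
  40 * (P3tilde e)%:Z <= \sum_v \sum_x \sum_y weight v x y.
Proof.
have -> : (P3tilde e)%:Z = \sum_(t : T * T * T) ind t.1.1 t.1.2 t.2.
  by rewrite /P3tilde -sum_indicator.
rewrite !pair_big /= -(ler_pMn2r (n := 6)) // -mulrnAr -!sum_sym3 mulr_sumr.
by apply: ler_sum => t _; apply: local_inequality.
Qed.

Lemma P3tilde_bound_int : 25 * (P3tilde e)%:Z <= 2 * #|T|%:Z ^+ 3.
Proof.
have total_bound : 5 * \sum_v \sum_x \sum_y weight v x y <= 16 * #|T|%:Z ^+ 3.
  rewrite mulr_sumr (le_trans (ler_sum _ (fun v _ => weight_total_bound v))) //.
  have -> : 16 * #|T|%:Z ^+ 3 = 16 * #|T|%:Z ^+ 2 *+ #|T|.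
    by rewrite -mulr_natr exprS; ring.
  by rewrite sumr_const.
move: weighted_count total_bound; set W := \sum_v _; set N := _ ^+ 3.
by lia.
Qed.

End WeightedCounting.

Local Close Scope ring_scope.

Theorem mainTheorem1 (T : finType) (e : rel T) :
  two_free e -> 25 * P3tilde e <= 2 * #|T| ^ 3.
Proof.
have cube : ((#|T| ^ 3)%:Z = #|T|%:Z ^+ 3)%R by rewrite -natz natrX natz.
move=> two_free_e; have := P3tilde_bound_int two_free_e.
by rewrite -cube; lia.
Qed.
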